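(* Let $\mathcal{C}$ be a full reflective subcategory of $\mathsf{Top}$ which is contained in the category $\mathsf{Top}_0$ of T$_0$-spaces and contains all compact metrizable spaces. Then the empty space is the only finitely presentable object of $\mathcal{C}$.
   Context: An object $X$ of a category $\mathcal{C}$ is finitely presentable if for every directed diagram $(Z_i)_{i\in I}$ in $\mathcal{C}$ (indexed by a directed poset $I$, i.e. every finite subset has an upper bound), with connecting morphisms $z_{i,j}$ and colimit cocone $c_i:Z_i\to Z$ in $\mathcal{C}$, every morphism $f:X\to Z$ factorizes essentially uniquely through some $c_i$: (i) there are $i$ and $g:X\to Z_i$ with $f=c_i\cdot g$, and (ii) whenever $g':X\to Z_i$ also satisfies $f=c_i\cdot g'$, some connecting morphism $z_{i,j}$ satisfies $z_{i,j}\cdot g=z_{i,j}\cdot g'$. *)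

From HB Require Import structures.
From mathcomp Require Import all_boot all_order all_algebra.
From mathcomp Require Import all_classical all_reals all_analysis.
From mathcomp Require Import Rstruct Rstruct_topology.
Set Implicit Arguments. Unset Strict Implicit. Unset Printing Implicit Defensive.
Import Order.TTheory GRing.Theory Num.Theory.
Local Open Scope classical_set_scope.
Local Open Scope ring_scope.

Definition metrizable_space (T : topologicalType) : Prop :=
  exists d : T -> T -> Rdefinitions.R,
    [/\ (forall x y, 0 <= d x y),
        (forall x y, d x y = 0 <-> x = y),
        (forall x y, d x y = d y x),
        (forall x y z, d x z <= d x y + d y z) &
        (forall A : set T, open A <->
           (forall x, A x -> exists2 e, 0 < e & forall y, d x y < e -> A y))].

(* A full subcategory of Top is given by a class of spaces [C]; its morphisms
   are all continuous maps between members of [C]. *)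
Definition reflective_in_Top (C : topologicalType -> Prop) : Prop :=
  forall X : topologicalType,
    exists (RX : topologicalType) (eta : X -> RX),
      [/\ C RX, continuous eta &
        forall (Y : topologicalType) (f : X -> Y), C Y -> continuous f ->
          exists g : RX -> Y, (continuous g /\ f = g \o eta) /\
            forall g' : RX -> Y, continuous g' -> f = g' \o eta -> g' = g].

Definition directed_poset (I : Type) (le : I -> I -> Prop) : Prop :=
  [/\ (forall i, le i i),
      (forall i j, le i j -> le j i -> i = j),
      (forall i j k, le i j -> le j k -> le i k) &
      (forall s : list I, exists j, forall i, List.In i s -> le i j)].

Definition diagram_in (C : topologicalType -> Prop) (I : Type) (le : I -> I -> Prop)
  (Z : I -> topologicalType) (z : forall i j, le i j -> Z i -> Z j) : Prop :=
  [/\ (forall i, C (Z i)),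
      (forall i j (p : le i j), continuous (z i j p)),
      (forall i (p : le i i), z i i p = id) &
      (forall i j k (p : le i j) (q : le j k) (r : le i k),
          z i k r = z j k q \o z i j p)].

Definition is_cocone (I : Type) (le : I -> I -> Prop)
  (Z : I -> topologicalType) (z : forall i j, le i j -> Z i -> Z j)
  (W : topologicalType) (w : forall i, Z i -> W) : Prop :=
  (forall i, continuous (w i)) /\
  (forall i j (p : le i j), w j \o z i j p = w i).

Definition is_colimit_in (C : topologicalType -> Prop) (I : Type) (le : I -> I -> Prop)
  (Z : I -> topologicalType) (z : forall i j, le i j -> Z i -> Z j)
  (Zc : topologicalType) (c : forall i, Z i -> Zc) : Prop :=
  [/\ C Zc, is_cocone z c &
    forall (W : topologicalType) (w : forall i, Z i -> W), C W -> is_cocone z w ->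
      exists h : Zc -> W, (continuous h /\ forall i, h \o c i = w i) /\
        forall h' : Zc -> W, continuous h' -> (forall i, h' \o c i = w i) -> h' = h].

Definition finitely_presentable_in (C : topologicalType -> Prop) (X : topologicalType) : Prop :=
  forall (I : Type) (le : I -> I -> Prop) (Z : I -> topologicalType)
         (z : forall i j, le i j -> Z i -> Z j)
         (Zc : topologicalType) (c : forall i, Z i -> Zc),
    directed_poset le -> diagram_in C z -> is_colimit_in C z c ->
    forall f : X -> Zc, continuous f ->
      (exists i (g : X -> Z i), continuous g /\ f = c i \o g) /\
      (forall i (g g' : X -> Z i), continuous g -> continuous g' ->
          f = c i \o g -> f = c i \o g' ->
          exists j (p : le i j), z i j p \o g = z i j p \o g').

From HB Require Import structures.
From mathcomp Require Import all_boot all_order all_algebra.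
From mathcomp Require Import all_classical all_reals all_analysis.
From mathcomp Require Import Rstruct Rstruct_topology.
Set Implicit Arguments. Unset Strict Implicit. Unset Printing Implicit Defensive.
Import Order.TTheory GRing.Theory Num.Theory.
Local Open Scope classical_set_scope.
Local Open Scope ring_scope.

(* Let [Z] be the disjoint union of two convergent sequences with their limits,
   and let the shift [Z -> Z] fix both limits, move every other point one step
   towards its limit, and send the first point of each sequence to the limit of
   the other one.  In a cocone of the chain [Z -> Z -> ...] of shifts into a
   T0 space, the images of the two limits lie in each other's closure, so every
   such cocone is constant and the one-point space is the colimit in [C].  For
   nonempty [X], the map [X -> 1] then factors through [Z] via either limit,
   and since shifts fix the limits these two factorisations are never
   identified. *)

Lemma nbhs_metricP {R : numDomainType} (T : metricType R) (x : T) (V : set T) :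
  nbhs x V <-> exists2 e, 0 < e & forall y, mdist x y < e -> V y.
Proof. by rewrite -metricType_numDomainType.filter_from_mdist_nbhs. Qed.

Lemma metric_metrizable (T : metricType Rdefinitions.R) : metrizable_space T.
Proof.
exists mdist; split.
- exact: mdist_ge0.
- by move=> x y; split=> [/mdist_positivity|->]; last exact: mdistxx.
- exact: metric_sym.
- exact: metric_triangle.
- move=> A; rewrite openE; split=> Aopen x /Aopen.
    by move/nbhs_metricP.
  by move=> /nbhs_metricP.
Qed.

Lemma discrete_metrizable (T : discreteTopologicalType) : metrizable_space T.
Proof.
exists (fun x y : T => if x == y then 0 else 1); split.
- by move=> x y; case: eqP.
- by move=> x y; split=> [|->]; [case: eqP => // _ /eqP; rewrite oner_eq0|rewrite eqxx].
- by move=> x y; rewrite eq_sym.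
- move=> x y z; case: (eqVneq x y) => [->|_]; first by rewrite add0r.
  by case: eqP; case: eqP; rewrite ?addr0 ?ler0D ?lerDl.
- move=> A; split=> [_ x Ax|_]; last exact: discrete_open.
  by exists 1 => // y; case: eqP => [<-|_]; rewrite ?ltxx.
Qed.

Lemma kolmogorov_nbhs_eq (T : topologicalType) (x y : T) : kolmogorov_space T ->
  (forall U, nbhs x U -> U y) -> (forall U, nbhs y U -> U x) -> x = y.
Proof.
move=> T0 xy yx; apply/eqP/contraT => /T0[U [[xU yU]|[yU xU]]].
  by move: yU; rewrite inE => /(_ (xy U (set_mem xU))).
by move: xU; rewrite inE => /(_ (yx U (set_mem yU))).
Qed.

Lemma leq_directed : directed_poset (fun i j : nat => (i <= j)%N).
Proof.
split=> [i|i j ij ji|i j k|s]; [exact: leqnn|exact/anti_leq/andP|exact: leq_trans|].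
exists (foldr maxn 0%N s) => i; elim: s => //= j s IHs [<-|/IHs ij].
  exact: leq_maxl.
exact: leq_trans ij (leq_maxr _ _).
Qed.

Lemma empty_finitely_presentable (C : topologicalType -> Prop) (X : topologicalType) :
  (X -> False) -> finitely_presentable_in C X.
Proof.
move=> X0 I le Z z Zc c [le_refl _ _ le_ub] _ _ f _; split=> [|i g g' _ _ _ _].
  have [i _] := le_ub nil.
  exists i, (fun x => match X0 x with end).
  by split=> [x|]; [case: (X0 x)|apply/funext => x; case: (X0 x)].
by exists i, (le_refl i); apply/funext => x; case: (X0 x).
Qed.

Definition two_seq : Type := (bool * nat)%type.
HB.instance Definition _ := Choice.on two_seq.

(* [(s, 0)] is the limit of the sequence [(s, n.+1)], and [lim_dist (s, n)]
   the distance between them; it is [0] for [n = 0] because [0^-1 = 0]. *)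
Definition lim_dist (x : two_seq) : Rdefinitions.R := x.2%:R^-1.

Definition two_seq_dist (x y : two_seq) : Rdefinitions.R :=
  if x == y then 0
  else if x.1 == y.1 then Num.max (lim_dist x) (lim_dist y) else 1.

Lemma lim_dist_ge0 x : 0 <= lim_dist x.
Proof. by rewrite invr_ge0 ler0n. Qed.

Lemma lim_dist_le1 x : lim_dist x <= 1.
Proof. by case: x => s [|n]; rewrite /lim_dist ?invr0 // invf_le1 ?ler1n. Qed.

Lemma lim_dist_gt0 s n : 0 < lim_dist (s, n.+1).
Proof. by rewrite invr_gt0 ltr0Sn. Qed.

Lemma lim_dist_lt (e : Rdefinitions.R) s n :
  0 < e -> (Num.truncn e^-1 < n)%N -> lim_dist (s, n) < e.
Proof.
move=> e0 en; rewrite -[e]invrK ltf_pV2 ?posrE ?invr_gt0 ?ltr0n //; last first.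
  exact: leq_ltn_trans en.
by apply: lt_le_trans (truncnS_gt _) _; rewrite ler_nat.
Qed.

Lemma lim_dist_le_dist x y : x != y -> lim_dist x <= two_seq_dist x y.
Proof.
rewrite /two_seq_dist => /negbTE ->; case: ifP => _; last exact: lim_dist_le1.
by rewrite le_max lexx.
Qed.

Lemma two_seq_dist_xx x : two_seq_dist x x = 0.
Proof. by rewrite /two_seq_dist eqxx. Qed.

Lemma two_seq_dist_sym x y : two_seq_dist x y = two_seq_dist y x.
Proof. by rewrite /two_seq_dist eq_sym [y.1 == _]eq_sym maxC. Qed.

Lemma two_seq_dist_ge0 x y : 0 <= two_seq_dist x y.
Proof.
case: (eqVneq x y) => [->|/lim_dist_le_dist]; first by rewrite two_seq_dist_xx.
exact/le_trans/lim_dist_ge0.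
Qed.

Lemma two_seq_dist_eq0 x y : two_seq_dist x y = 0 -> x = y.
Proof.
move=> d0; apply/eqP/contraT => xy.
have : lim_dist x <= 0 /\ lim_dist y <= 0.
  by rewrite -d0 {2}two_seq_dist_sym !lim_dist_le_dist // eq_sym.
case: x y xy d0 => [s [|m]] [t [|n]] xy d0 [];
  rewrite ?(leNgt (lim_dist _)) ?lim_dist_gt0 // => _ _.
move: xy d0; rewrite xpair_eqE eqxx andbT => /negbTE st.
by rewrite /two_seq_dist xpair_eqE st /= => /eqP; rewrite oner_eq0.
Qed.

Lemma two_seq_dist_side x y : x.1 != y.1 -> two_seq_dist x y = 1.
Proof.
move=> /negbTE xy1; rewrite /two_seq_dist xy1; case: eqP => // exy.
by rewrite exy eqxx in xy1.
Qed.

Lemma two_seq_dist_same x y :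
  x != y -> x.1 = y.1 -> two_seq_dist x y = Num.max (lim_dist x) (lim_dist y).
Proof. by rewrite /two_seq_dist => /negbTE -> ->; rewrite eqxx. Qed.

Lemma two_seq_dist_triangle y x z :
  two_seq_dist x z <= two_seq_dist x y + two_seq_dist y z.
Proof.
have [->|xy] := eqVneq x y; first by rewrite two_seq_dist_xx add0r.
have [->|yz] := eqVneq y z; first by rewrite two_seq_dist_xx addr0.
have [->|xz] := eqVneq x z; first by rewrite two_seq_dist_xx addr_ge0 ?two_seq_dist_ge0.
have [xz1|xz1] := eqVneq x.1 z.1; last first.
  rewrite two_seq_dist_side //.
  have [xy1|yz1] : x.1 != y.1 \/ y.1 != z.1.
    by move: xz1; case: x.1; case: y.1; case: z.1; auto.
  - by rewrite two_seq_dist_side // lerDl two_seq_dist_ge0.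
  - by rewrite [two_seq_dist y z]two_seq_dist_side // lerDr two_seq_dist_ge0.
rewrite two_seq_dist_same // ge_max; apply/andP; split.
  by apply: le_trans (lim_dist_le_dist xy) _; rewrite lerDl two_seq_dist_ge0.
rewrite eq_sym in yz; apply: le_trans (lim_dist_le_dist yz) _.
by rewrite two_seq_dist_sym lerDr two_seq_dist_ge0.
Qed.

HB.instance Definition _ := @isMetric.Build Rdefinitions.R two_seq two_seq_dist
  two_seq_dist_xx two_seq_dist_eq0 two_seq_dist_sym two_seq_dist_triangle.

Lemma nbhs_two_seq_isolated s n (V : set two_seq) :
  V (s, n.+1) -> nbhs ((s, n.+1) : two_seq) V.
Proof.
move=> Vsn; apply/nbhs_metricP; exists (lim_dist (s, n.+1)); first exact: lim_dist_gt0.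
move=> y; have [<- //|sny] := eqVneq ((s, n.+1) : two_seq) y.
by rewrite ltNge lim_dist_le_dist.
Qed.

Lemma two_seq_mdistE (x y : two_seq) : mdist x y = two_seq_dist x y.
Proof. by []. Qed.

Lemma two_seq_dist_limit s n : two_seq_dist (s, 0%N) (s, n) = lim_dist (s, n).
Proof.
case: n => [|n]; first by rewrite two_seq_dist_xx /lim_dist invr0.
rewrite two_seq_dist_same ?xpair_eqE ?andbF // {1}/lim_dist /= invr0.
exact/max_idPr/lim_dist_ge0.
Qed.

Lemma nbhs_two_seq_limit s (V : set two_seq) :
  nbhs ((s, 0%N) : two_seq) V <->
  V (s, 0%N) /\ exists M, forall n, (M < n)%N -> V (s, n).
Proof.
split=> [nV|[V0 [M tailV]]].
  split; first exact: nbhs_singleton nV.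
  move: nV => /nbhs_metricP[e e0 Ve]; exists (Num.truncn e^-1) => n en.
  by apply: Ve; rewrite two_seq_mdistE two_seq_dist_limit lim_dist_lt.
apply/nbhs_metricP; exists (lim_dist (s, M.+1)); first exact: lim_dist_gt0.
move=> [t n]; rewrite two_seq_mdistE; have [<-|st] := eqVneq s t; last first.
  by rewrite two_seq_dist_side // ltNge lim_dist_le1.
case: n => [//|n]; rewrite two_seq_dist_limit ltf_pV2 ?posrE ?ltr0n // ltr_nat.
by move=> /ltnW; apply: tailV.
Qed.

(* A filter with neither limit as a cluster point eventually lives in a finite
   set, where it clusters by compactness. *)
Lemma two_seq_compact : compact [set: two_seq].
Proof.
move=> F PF _.
have [[s s_cluster]|noclust] := pselect (exists s, cluster F ((s, 0%N) : two_seq)).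
  by exists (s, 0%N).
have avoid s : exists2 A, F A & exists M, forall n, (M < n)%N -> ~ A (s, n).
  apply: contrapT => navoid; apply: noclust; exists s => A B FA.
  move=> /nbhs_two_seq_limit[_ [M tailB]].
  suff [n Mn Asn] : exists2 n, (M < n)%N & A (s, n).
    by exists (s, n); split=> //; exact: tailB.
  apply: contrapT => nA; apply: navoid; exists A => //; exists M => n Mn Asn.
  by apply: nA; exists n.
have [Af FAf [Mf Af_tail]] := avoid false.
have [At FAt [Mt At_tail]] := avoid true.
pose K : set two_seq := [set: bool] `*` `I_(maxn Mf Mt).+1.
have FK : F K.
  apply: filterS (filterI FAf FAt) => -[[] n] [Afn Atn]; split=> //=; rewrite ltnS.
  - by apply: contraPleq Atn => /(leq_ltn_trans (leq_maxr _ _)); exact: At_tail.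
  - by apply: contraPleq Afn => /(leq_ltn_trans (leq_maxl _ _)); exact: Af_tail.
have Kfin : finite_set K by apply: finite_setX; [exact: finite_finset|exact: finite_II].
have [y [_ Fy]] := finite_compact Kfin PF FK.
by exists y.
Qed.

Definition shift (x : two_seq) : two_seq :=
  match x with
  | (s, 0%N) => (s, 0%N)
  | (s, 1%N) => (~~ s, 0%N)
  | (s, n.+2) => (s, n.+1)
  end.

Lemma shift_continuous : continuous shift.
Proof.
move=> [s [|n]] V /=; last by move=> /nbhs_singleton; exact: nbhs_two_seq_isolated.
move=> /nbhs_two_seq_limit[V0 [M tailV]]; apply/nbhs_two_seq_limit; split=> //.
by exists M.+1 => -[|[|n]] //= Mn; apply: tailV.
Qed.

Lemma iter_shift_limit n s : iter n shift (s, 0%N) = (s, 0%N).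
Proof. by elim: n => //= n ->. Qed.

Lemma iter_shift_cross n s : iter n.+1 shift (s, n.+1) = (~~ s, 0%N).
Proof. by elim: n => // n IHn; rewrite iterSr. Qed.

Lemma iter_shift_continuous n : continuous (iter n shift).
Proof.
elim: n => [|n IHn] x /=; first exact: cvg_id.
by apply: continuous_comp; [exact: IHn|exact: shift_continuous].
Qed.

Definition shift_chain (i j : nat) (_ : (i <= j)%N) : two_seq -> two_seq :=
  iter (j - i) shift.

Lemma shift_chain_diagram (C : topologicalType -> Prop) :
  C two_seq -> diagram_in C shift_chain.
Proof.
split=> // [i j p|i p|i j k ij jk ik]; first exact: iter_shift_continuous.
  by rewrite /shift_chain subnn.
by apply/funext => x; rewrite /shift_chain /= -iterD addnBA // subnK.
Qed.

Lemma shift_chain_cocone_cst (W : topologicalType) (w : nat -> two_seq -> W) :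
  kolmogorov_space W -> is_cocone shift_chain w ->
  forall i x, w i x = w 0%N (false, 0%N).
Proof.
move=> T0 [w_cont w_comm].
have w_iter i n x : w i x = w (i + n)%N (iter n shift x).
  by rewrite -(w_comm i (i + n)%N (leq_addr _ _)) /shift_chain /= addKn.
have w_limit i s : w i (s, 0%N) = w 0%N (s, 0%N).
  by rewrite (w_iter 0%N i) iter_shift_limit.
have w_cross i s n : w i (s, n.+1) = w 0%N (~~ s, 0%N).
  by rewrite (w_iter i n.+1) iter_shift_cross w_limit.
have w_adherent s U : nbhs (w 0%N (s, 0%N)) U -> U (w 0%N (~~ s, 0%N)).
  move=> /(w_cont 0%N) /nbhs_two_seq_limit[_ [M tailU]].
  by rewrite -(w_cross 0%N s M); exact: tailU.
have w_sides : w 0%N (false, 0%N) = w 0%N (true, 0%N).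
  exact: kolmogorov_nbhs_eq T0 (w_adherent false) (w_adherent true).
by move=> i [[] [|n]]; rewrite ?w_limit ?w_cross /= -?w_sides.
Qed.

Lemma shift_chain_colimit (C : topologicalType -> Prop) :
  C (discrete_topology unit) -> (forall W, C W -> kolmogorov_space W) ->
  is_colimit_in C shift_chain (fun _ _ => tt : discrete_topology unit).
Proof.
move=> C1 CT0; split=> //; first by split=> // i; exact: cst_continuous.
move=> W w CW w_cocone; exists (fun=> w 0%N (false, 0%N)); split.
  split=> [|i]; first exact: cst_continuous.
  by apply/funext => x /=; rewrite (shift_chain_cocone_cst (CT0 W CW) w_cocone i x).
move=> h _ /(_ 0%N) /(congr1 (@^~ (false, 0%N))) /= h_tt.
by apply/funext => -[].
Qed.

Lemma inhabited_not_finitely_presentable (C : topologicalType -> Prop) (X : topologicalType) :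
  C two_seq -> C (discrete_topology unit) -> (forall W, C W -> kolmogorov_space W) ->
  X -> ~ finitely_presentable_in C X.
Proof.
move=> C2 C1 CT0 x fpX.
have [_ factor_uniq] := fpX _ _ _ _ _ _ leq_directed (shift_chain_diagram C2)
  (shift_chain_colimit C1 CT0) (fun=> tt) (@cst_continuous _ _ _).
have const_cont s : continuous (fun _ : X => (s, 0%N) : two_seq).
  by move=> ?; exact: cst_continuous.
have [j [p]] := factor_uniq 0%N _ _ (const_cont false) (const_cont true) erefl erefl.
by move=> /(congr1 (@^~ x)); rewrite /= /shift_chain !iter_shift_limit.
Qed.

Theorem theorem3p4 (C : topologicalType -> Prop) :
  reflective_in_Top C ->
  (forall X : topologicalType, C X -> @kolmogorov_space X) ->
  (forall X : topologicalType, compact [set: X] -> metrizable_space X -> C X) ->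
  forall X : topologicalType, C X ->
    (finitely_presentable_in C X <-> (X -> False)).
Proof.
move=> _ CT0 C_cpt_metric X _.
have C2 : C two_seq := C_cpt_metric _ two_seq_compact (metric_metrizable _).
have C1 : C (discrete_topology unit).
  apply: C_cpt_metric; last exact: discrete_metrizable.
  by apply: finite_compact; exact: (@finite_finset unit).
split; last exact: empty_finitely_presentable.
by move=> fpX x; exact: inhabited_not_finitely_presentable C2 C1 CT0 x fpX.
Qed.
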